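(* Under the hypotheses of Proposition 1 — namely $\boldsymbol{S}\in\mathrm{Mat}(M,M,\mathbb{C})$ invertible, $\boldsymbol{U}\in\mathrm{Mat}(m,M,\mathbb{C})$, $\boldsymbol{V}\in\mathrm{Mat}(M,m,\mathbb{C})$, $\boldsymbol{K}$ satisfying $\boldsymbol{S}\boldsymbol{K}+\boldsymbol{K}\boldsymbol{S}=\boldsymbol{V}\boldsymbol{U}$, $\boldsymbol{\Xi}=e^{-\boldsymbol{S}x-\boldsymbol{S}^{-1}y}$, $p_0$ a constant $m\times m$ matrix (or a function of $x$ only), and $$q=\boldsymbol{U}\boldsymbol{\Xi}\,(\boldsymbol{I}_M+(\boldsymbol{K}\boldsymbol{\Xi})^2)^{-1}\boldsymbol{V},\qquad p=p_0-\boldsymbol{U}\boldsymbol{\Xi}\boldsymbol{K}\boldsymbol{\Xi}\,(\boldsymbol{I}_M+(\boldsymbol{K}\boldsymbol{\Xi})^2)^{-1}\boldsymbol{V}$$ on an open set where $\boldsymbol{I}_M+(\boldsymbol{K}\boldsymbol{\Xi})^2$ is invertible — the identity $$(q_y)^2+(p_y)^2=p_y$$ holds (as an identity of $m\times m$ matrix functions).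
   Context: Subscripts $x,y$ denote partial derivatives with respect to the real variables $x,y$; $\boldsymbol{I}_M$ is the $M\times M$ identity matrix. *)

(* classical reals; complex numbers as pairs of reals,
   matrices as functions nat -> nat -> C with dimensions passed explicitly. *)
From Stdlib Require Import Reals Factorial.
Open Scope R_scope.

Definition C : Type := (R * R)%type.
Definition Re (z : C) : R := fst z.
Definition Im (z : C) : R := snd z.
Definition C0 : C := (0, 0).
Definition C1 : C := (1, 0).
Definition Cadd (a b : C) : C := (fst a + fst b, snd a + snd b).
Definition Cneg (a : C) : C := (- fst a, - snd a).
Definition Cmul (a b : C) : C :=
  (fst a * fst b - snd a * snd b, fst a * snd b + snd a * fst b).
Definition Crscal (r : R) (a : C) : C := (r * fst a, r * snd a).

(* ---------- matrices (entries indexed from 0) ---------- *)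
Definition Mat : Type := nat -> nat -> C.

Fixpoint csum (n : nat) (f : nat -> C) : C :=
  match n with O => C0 | S k => Cadd (csum k f) (f k) end.

Definition mmul (n : nat) (A B : Mat) : Mat :=
  fun i j => csum n (fun k => Cmul (A i k) (B k j)).
Definition madd (A B : Mat) : Mat := fun i j => Cadd (A i j) (B i j).
Definition mneg (A : Mat) : Mat := fun i j => Cneg (A i j).
Definition msub (A B : Mat) : Mat := madd A (mneg B).
Definition mrscal (r : R) (A : Mat) : Mat := fun i j => Crscal r (A i j).
Definition mid : Mat := fun i j => if Nat.eqb i j then C1 else C0.

Fixpoint mpow (n : nat) (A : Mat) (k : nat) : Mat :=
  match k with O => mid | S k' => mmul n A (mpow n A k') end.

Definition meq (r c : nat) (A B : Mat) : Prop :=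
  forall i j, (i < r)%nat -> (j < c)%nat -> A i j = B i j.

Definition is_inverse (n : nat) (A B : Mat) : Prop :=
  meq n n (mmul n A B) mid /\ meq n n (mmul n B A) mid.

Fixpoint mexp_partial (n : nat) (A : Mat) (N : nat) : Mat :=
  match N with
  | O => mid
  | S N' => madd (mexp_partial n A N') (mrscal (/ INR (fact N)) (mpow n A N))
  end.

Definition is_mexp (n : nat) (A E : Mat) : Prop :=
  forall i j, (i < n)%nat -> (j < n)%nat ->
    Un_cv (fun N => Re (mexp_partial n A N i j)) (Re (E i j)) /\
    Un_cv (fun N => Im (mexp_partial n A N i j)) (Im (E i j)).

Definition open2 (D : R -> R -> Prop) : Prop :=
  forall x y, D x y -> exists eps, 0 < eps /\
    forall x' y', (x' - x) ^ 2 + (y' - y) ^ 2 < eps ^ 2 -> D x' y'.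

Definition has_pderiv_y (r c : nat) (F : R -> R -> Mat) (x y : R) (Fy : Mat) : Prop :=
  forall i j, (i < r)%nat -> (j < c)%nat ->
    derivable_pt_lim (fun t => Re (F x t i j)) y (Re (Fy i j)) /\
    derivable_pt_lim (fun t => Im (F x t i j)) y (Im (Fy i j)).

(* ---------- the solution of Proposition 1 ----------
   Xi x y = exp(-S x - S^{-1} y);  W x y = (I_M + (K Xi)^2)^{-1}. *)
Definition q_sol (M : nat) (U V : Mat) (Xi W : R -> R -> Mat) (x y : R) : Mat :=
  mmul M (mmul M (mmul M U (Xi x y)) (W x y)) V.

Definition p_sol (M : nat) (p0 : R -> Mat) (U V K : Mat) (Xi W : R -> R -> Mat)
  (x y : R) : Mat :=
  msub (p0 x)
    (mmul M (mmul M (mmul M (mmul M (mmul M U (Xi x y)) K) (Xi x y)) (W x y)) V).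

(* Write Z := K Xi and W := (I + Z^2)^-1.  Since S^-1 commutes with Xi, Xi_y = -S^-1 Xi and
   Z_y = -Z S^-1, hence W_y = W Z (S^-1 Z + Z S^-1) W and
     q_y = U Xi W (Z S^-1 Z - S^-1) W V,    p_y = U Xi W (S^-1 Z + Z S^-1) W V.
   As S also commutes with Xi, the Sylvester equation gives V U Xi = S Z + Z S, and
   q_y^2 + p_y^2 = p_y becomes an identity in Z, S, S^-1 and W that only uses
   W (I + Z^2) = (I + Z^2) W = I.  The analytic input is the product rule, the derivative of
   an inverse, and d/dh exp(A + h B) = B exp(A) at h = 0 for commuting A and B, proved from
   a second-order bound on (A + h B)^k - A^k. *)

From Stdlib Require Import Reals Factorial Lra Lia Psatz FunctionalExtensionality Setoid Morphisms.
Open Scope R_scope.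

Lemma C_ext (a b : C) : fst a = fst b -> snd a = snd b -> a = b.
Proof. destruct a, b; simpl; intros; subst; reflexivity. Qed.

Ltac C_unfold := unfold Cadd, Cneg, Cmul, Crscal, C0, C1 in *; cbn [fst snd] in *.
Ltac C_ring := apply C_ext; C_unfold; ring.

Lemma mat_ext (A B : Mat) : (forall i j, A i j = B i j) -> A = B.
Proof.
  intros H; apply functional_extensionality; intro i;
  apply functional_extensionality; intro j; apply H.
Qed.

Definition mzero : Mat := fun _ _ => C0.

Lemma csum_ext n f g : (forall k, (k < n)%nat -> f k = g k) -> csum n f = csum n g.
Proof.
  induction n; simpl; intros H; auto. rewrite IHn by (intros; apply H; lia).
  rewrite H by lia; auto.
Qed.

Lemma csum_add n f g : csum n (fun k => Cadd (f k) (g k)) = Cadd (csum n f) (csum n g).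
Proof. induction n; simpl. C_ring. rewrite IHn. C_ring. Qed.

Lemma csum_neg n f : csum n (fun k => Cneg (f k)) = Cneg (csum n f).
Proof. induction n; simpl. C_ring. rewrite IHn. C_ring. Qed.

Lemma csum_mull n a f : csum n (fun k => Cmul a (f k)) = Cmul a (csum n f).
Proof. induction n; simpl. C_ring. rewrite IHn. C_ring. Qed.

Lemma csum_mulr n a f : csum n (fun k => Cmul (f k) a) = Cmul (csum n f) a.
Proof. induction n; simpl. C_ring. rewrite IHn. C_ring. Qed.

Lemma csum_rscal n r f : csum n (fun k => Crscal r (f k)) = Crscal r (csum n f).
Proof. induction n; simpl. C_ring. rewrite IHn. C_ring. Qed.

Lemma csum_zero n : csum n (fun _ => C0) = C0.
Proof. induction n; simpl. auto. rewrite IHn. C_ring. Qed.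

Lemma csum_swap n p (f : nat -> nat -> C) :
  csum n (fun k => csum p (fun l => f k l)) = csum p (fun l => csum n (fun k => f k l)).
Proof.
  induction n; simpl. rewrite csum_zero; auto.
  rewrite IHn. rewrite <- csum_add. auto.
Qed.

Lemma csum_delta n i f : (i < n)%nat ->
  csum n (fun k => Cmul (mid i k) (f k)) = f i.
Proof.
  induction n; intros H; simpl. lia.
  unfold mid at 2. destruct (Nat.eqb_spec i n).
  - subst. rewrite csum_ext with (g := fun _ => C0). rewrite csum_zero. C_ring.
    intros k Hk. unfold mid. destruct (Nat.eqb_spec n k). lia. C_ring.
  - rewrite IHn by lia. C_ring.
Qed.

Lemma csum_delta_r n j f : (j < n)%nat ->
  csum n (fun k => Cmul (f k) (mid k j)) = f j.
Proof.
  intros H. rewrite <- (csum_delta n j f H). apply csum_ext; intros k _.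
  unfold mid. destruct (Nat.eqb_spec j k), (Nat.eqb_spec k j); try lia; C_ring.
Qed.

Lemma mmul_assoc n p A B Cm : mmul n (mmul p A B) Cm = mmul p A (mmul n B Cm).
Proof.
  apply mat_ext; intros i j; unfold mmul.
  rewrite (csum_ext n _ (fun l => csum p (fun k => Cmul (A i k) (Cmul (B k l) (Cm l j))))).
  2:{ intros l _. rewrite <- csum_mulr. apply csum_ext; intros. C_ring. }
  rewrite csum_swap. apply csum_ext; intros. rewrite csum_mull. auto.
Qed.

Lemma mmul_addl n A B Cm : mmul n (madd A B) Cm = madd (mmul n A Cm) (mmul n B Cm).
Proof.
  apply mat_ext; intros i j; unfold mmul, madd. rewrite <- csum_add.
  apply csum_ext; intros; C_ring.
Qed.

Lemma mmul_addr n A B Cm : mmul n Cm (madd A B) = madd (mmul n Cm A) (mmul n Cm B).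
Proof.
  apply mat_ext; intros i j; unfold mmul, madd. rewrite <- csum_add.
  apply csum_ext; intros; C_ring.
Qed.

Lemma mmul_negl n A B : mmul n (mneg A) B = mneg (mmul n A B).
Proof.
  apply mat_ext; intros i j; unfold mmul, mneg. rewrite <- csum_neg.
  apply csum_ext; intros; C_ring.
Qed.

Lemma mmul_negr n A B : mmul n A (mneg B) = mneg (mmul n A B).
Proof.
  apply mat_ext; intros i j; unfold mmul, mneg. rewrite <- csum_neg.
  apply csum_ext; intros; C_ring.
Qed.

Lemma mmul_subl n A B Cm : mmul n (msub A B) Cm = msub (mmul n A Cm) (mmul n B Cm).
Proof. unfold msub. rewrite mmul_addl, mmul_negl. auto. Qed.

Lemma mmul_subr n A B Cm : mmul n Cm (msub A B) = msub (mmul n Cm A) (mmul n Cm B).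
Proof. unfold msub. rewrite mmul_addr, mmul_negr. auto. Qed.

Lemma mmul_scall n r A B : mmul n (mrscal r A) B = mrscal r (mmul n A B).
Proof.
  apply mat_ext; intros i j; unfold mmul, mrscal. rewrite <- csum_rscal.
  apply csum_ext; intros; C_ring.
Qed.

Lemma mmul_scalr n r A B : mmul n A (mrscal r B) = mrscal r (mmul n A B).
Proof.
  apply mat_ext; intros i j; unfold mmul, mrscal. rewrite <- csum_rscal.
  apply csum_ext; intros; C_ring.
Qed.

Lemma mmul0l n A : mmul n mzero A = mzero.
Proof.
  apply mat_ext; intros i j; unfold mmul, mzero.
  transitivity (csum n (fun _ => C0)); [apply csum_ext; intros; C_ring | apply csum_zero].
Qed.

Lemma mmul0r n A : mmul n A mzero = mzero.
Proof.
  apply mat_ext; intros i j; unfold mmul, mzero.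
  transitivity (csum n (fun _ => C0)); [apply csum_ext; intros; C_ring | apply csum_zero].
Qed.

Lemma madd0l A : madd mzero A = A.
Proof. apply mat_ext; intros; unfold madd, mzero; C_ring. Qed.

Lemma madd0r A : madd A mzero = A.
Proof. apply mat_ext; intros; unfold madd, mzero; C_ring. Qed.

#[export] Instance meq_equiv r c : Equivalence (meq r c).
Proof.
  split; unfold meq; [intros A i j; auto | intros A B H i j Hi Hj; symmetry; auto
  | intros A B D H1 H2 i j Hi Hj; rewrite H1, H2; auto].
Qed.

#[export] Instance madd_proper r c : Proper (meq r c ==> meq r c ==> meq r c) madd.
Proof. intros A A' H B B' H' i j Hi Hj; unfold madd; rewrite H, H'; auto. Qed.

#[export] Instance mneg_proper r c : Proper (meq r c ==> meq r c) mneg.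
Proof. intros A A' H i j Hi Hj; unfold mneg; rewrite H; auto. Qed.

#[export] Instance msub_proper r c : Proper (meq r c ==> meq r c ==> meq r c) msub.
Proof. intros A A' H B B' H'; unfold msub; rewrite H, H'; reflexivity. Qed.

#[export] Instance mrscal_proper r c a : Proper (meq r c ==> meq r c) (mrscal a).
Proof. intros A A' H i j Hi Hj; unfold mrscal; rewrite H; auto. Qed.

#[export] Instance mmul_proper r n c : Proper (meq r n ==> meq n c ==> meq r c) (mmul n).
Proof.
  intros A A' H B B' H' i j Hi Hj; unfold mmul; apply csum_ext; intros k Hk.
  rewrite H, H'; auto.
Qed.

Ltac mexpand := repeat rewrite ?mmul_addl, ?mmul_addr, ?mmul_subl, ?mmul_subr, ?mmul_negl, ?mmul_negr, ?mmul_assoc.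
Ltac meq_ring := intros ? ? _ _; unfold msub, madd, mneg, mrscal, mzero; C_ring.
Ltac m_ring := apply mat_ext; intros; unfold msub, madd, mneg, mrscal, mzero; C_ring.

Lemma mmul1l n A : meq n n (mmul n mid A) A.
Proof. intros i j Hi Hj; unfold mmul; apply (csum_delta n i (fun k => A k j)); auto. Qed.

Lemma mmul1r n A : meq n n (mmul n A mid) A.
Proof. intros i j Hi Hj; unfold mmul; apply (csum_delta_r n j (fun k => A i k)); auto. Qed.

Lemma mmulKl n A B X : meq n n (mmul n A B) mid -> meq n n (mmul n A (mmul n B X)) X.
Proof. intros H. rewrite <- mmul_assoc, H. apply mmul1l. Qed.

Definition cnorm (z : C) : R := Rabs (fst z) + Rabs (snd z).
Fixpoint rsum (n : nat) (f : nat -> R) : R :=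
  match n with O => 0 | S k => rsum k f + f k end.
Definition mnorm (r c : nat) (A : Mat) : R := rsum r (fun i => rsum c (fun j => cnorm (A i j))).

Lemma rsum_ext n f g : (forall k, (k < n)%nat -> f k = g k) -> rsum n f = rsum n g.
Proof.
  induction n; simpl; intros H; auto. rewrite IHn by (intros; apply H; lia).
  rewrite H by lia; auto.
Qed.

Lemma rsum_le n f g : (forall k, (k < n)%nat -> f k <= g k) -> rsum n f <= rsum n g.
Proof.
  induction n; simpl; intros H. lra. assert (f n <= g n) by (apply H; lia).
  assert (rsum n f <= rsum n g) by (apply IHn; intros; apply H; lia). lra.
Qed.

Lemma rsum_nonneg n f : (forall k, (k < n)%nat -> 0 <= f k) -> 0 <= rsum n f.
Proof.
  induction n; simpl; intros H. lra. assert (0 <= f n) by (apply H; lia).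
  assert (0 <= rsum n f) by (apply IHn; intros; apply H; lia). lra.
Qed.

Lemma rsum_add n f g : rsum n (fun k => f k + g k) = rsum n f + rsum n g.
Proof. induction n; simpl. lra. rewrite IHn; lra. Qed.

Lemma rsum_scal n a f : rsum n (fun k => a * f k) = a * rsum n f.
Proof. induction n; simpl. lra. rewrite IHn; lra. Qed.

Lemma rsum_zero n : rsum n (fun _ => 0) = 0.
Proof. induction n; simpl; lra. Qed.

Lemma rsum_swap n p (f : nat -> nat -> R) :
  rsum n (fun k => rsum p (fun l => f k l)) = rsum p (fun l => rsum n (fun k => f k l)).
Proof.
  induction n; simpl. rewrite rsum_zero; auto.
  rewrite IHn. rewrite <- rsum_add. auto.
Qed.

Lemma rsum_term n f k : (forall k, (k < n)%nat -> 0 <= f k) -> (k < n)%nat -> f k <= rsum n f.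
Proof.
  induction n; simpl; intros H Hk. lia.
  assert (0 <= f n) by (apply H; lia).
  assert (0 <= rsum n f) by (apply rsum_nonneg; intros; apply H; lia).
  destruct (Nat.eq_dec k n). subst; lra.
  assert (f k <= rsum n f) by (apply IHn; [intros; apply H; lia | lia]). lra.
Qed.

Lemma cnorm_nonneg z : 0 <= cnorm z.
Proof. unfold cnorm. pose proof (Rabs_pos (fst z)); pose proof (Rabs_pos (snd z)); lra. Qed.

Lemma cnorm_add a b : cnorm (Cadd a b) <= cnorm a + cnorm b.
Proof.
  unfold cnorm, Cadd; simpl.
  pose proof (Rabs_triang (fst a) (fst b)); pose proof (Rabs_triang (snd a) (snd b)); lra.
Qed.

Lemma cnorm_neg a : cnorm (Cneg a) = cnorm a.
Proof. unfold cnorm, Cneg; simpl. rewrite !Rabs_Ropp; auto. Qed.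

Lemma cnorm_rscal r a : cnorm (Crscal r a) = Rabs r * cnorm a.
Proof. unfold cnorm, Crscal; simpl. rewrite !Rabs_mult; ring. Qed.

Lemma cnorm_mul a b : cnorm (Cmul a b) <= cnorm a * cnorm b.
Proof.
  unfold cnorm, Cmul; simpl. destruct a as [a1 a2], b as [b1 b2]; simpl.
  pose proof (Rabs_triang (a1*b1) (- (a2*b2))).
  pose proof (Rabs_triang (a1*b2) (a2*b1)).
  unfold Rminus. rewrite Rabs_Ropp in H. rewrite !Rabs_mult in *.
  pose proof (Rabs_pos a1); pose proof (Rabs_pos a2); pose proof (Rabs_pos b1);
  pose proof (Rabs_pos b2). nra.
Qed.

Lemma cnorm_C0 : cnorm C0 = 0.
Proof. unfold cnorm, C0; simpl. rewrite Rabs_R0; lra. Qed.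

Lemma cnorm_csum n f : cnorm (csum n f) <= rsum n (fun k => cnorm (f k)).
Proof.
  induction n; simpl. rewrite cnorm_C0; lra.
  pose proof (cnorm_add (csum n f) (f n)). lra.
Qed.

Lemma mnorm_nonneg r c A : 0 <= mnorm r c A.
Proof. unfold mnorm. apply rsum_nonneg; intros; apply rsum_nonneg; intros; apply cnorm_nonneg. Qed.

Lemma mnorm_add r c A B : mnorm r c (madd A B) <= mnorm r c A + mnorm r c B.
Proof.
  unfold mnorm. rewrite <- rsum_add. apply rsum_le; intros. rewrite <- rsum_add.
  apply rsum_le; intros. apply cnorm_add.
Qed.

Lemma mnorm_neg r c A : mnorm r c (mneg A) = mnorm r c A.
Proof. unfold mnorm. apply rsum_ext; intros; apply rsum_ext; intros. apply cnorm_neg. Qed.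

Lemma mnorm_rscal r c a A : mnorm r c (mrscal a A) = Rabs a * mnorm r c A.
Proof.
  unfold mnorm. rewrite <- rsum_scal. apply rsum_ext; intros. rewrite <- rsum_scal.
  apply rsum_ext; intros. apply cnorm_rscal.
Qed.

Lemma mnorm_entry r c A i j : (i < r)%nat -> (j < c)%nat -> cnorm (A i j) <= mnorm r c A.
Proof.
  intros. unfold mnorm.
  apply Rle_trans with (rsum c (fun j => cnorm (A i j))).
  apply (rsum_term c (fun j => cnorm (A i j))); auto; intros; apply cnorm_nonneg.
  apply (rsum_term r (fun i => rsum c (fun j => cnorm (A i j)))); auto.
  intros; apply rsum_nonneg; intros; apply cnorm_nonneg.
Qed.

Lemma mnorm_meq r c A B : meq r c A B -> mnorm r c A = mnorm r c B.
Proof.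
  intros H. unfold mnorm. apply rsum_ext; intros; apply rsum_ext; intros.
  rewrite H; auto.
Qed.

Lemma mnorm_mz r c : mnorm r c mzero = 0.
Proof.
  unfold mnorm, mzero. rewrite <- (rsum_zero r). apply rsum_ext; intros.
  rewrite <- (rsum_zero c). apply rsum_ext; intros. apply cnorm_C0.
Qed.

Lemma mnorm_mul r n c A B : mnorm r c (mmul n A B) <= mnorm r n A * mnorm n c B.
Proof.
  unfold mnorm at 1, mmul.
  apply Rle_trans with (rsum r (fun i => rsum n (fun k => cnorm (A i k) * mnorm n c B))).
  - apply rsum_le; intros i Hi.
    apply Rle_trans with (rsum c (fun j => rsum n (fun k => cnorm (A i k) * cnorm (B k j)))).
    + apply rsum_le; intros j Hj. eapply Rle_trans. apply cnorm_csum.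
      apply rsum_le; intros; apply cnorm_mul.
    + rewrite rsum_swap. apply rsum_le; intros k Hk. rewrite rsum_scal.
      apply Rmult_le_compat_l. apply cnorm_nonneg.
      apply (rsum_term n (fun k => rsum c (fun j => cnorm (B k j)))); auto.
      intros; apply rsum_nonneg; intros; apply cnorm_nonneg.
  - set (m := mnorm n c B). unfold mnorm. rewrite Rmult_comm, <- rsum_scal. apply rsum_le; intros i Hi.
    rewrite <- rsum_scal. apply Req_le, rsum_ext; intros; ring.
Qed.

Lemma mnorm_zero_meq r c A : mnorm r c A = 0 -> meq r c A mzero.
Proof.
  intros H i j Hi Hj. pose proof (mnorm_entry r c A i j Hi Hj). rewrite H in H0.
  unfold cnorm in H0. pose proof (Rabs_pos (fst (A i j))); pose proof (Rabs_pos (snd (A i j))).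
  assert (fst (A i j) = 0). { destruct (Req_dec (fst (A i j)) 0); auto.
    pose proof (Rabs_pos_lt _ H3). lra. }
  assert (snd (A i j) = 0). { destruct (Req_dec (snd (A i j)) 0); auto.
    pose proof (Rabs_pos_lt _ H4). lra. }
  unfold mzero, C0; apply C_ext; simpl; auto.
Qed.

Lemma msub_zero_meq r c A B : meq r c (msub A B) mzero -> meq r c A B.
Proof.
  intros H i j Hi Hj. specialize (H i j Hi Hj). unfold msub, madd, mneg, mzero in H.
  apply C_ext; C_unfold; injection H; intros; lra.
Qed.

Definition vanish0 (g : R -> R) : Prop := forall eps, 0 < eps -> exists d, 0 < d /\
  forall h, h <> 0 -> Rabs h < d -> g h < eps.

Lemma vanish0_plus f g : vanish0 f -> vanish0 g -> vanish0 (fun h => f h + g h).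
Proof.
  intros Hf Hg eps He. destruct (Hf (eps/2)) as [d1 [Hd1 H1]]; try lra.
  destruct (Hg (eps/2)) as [d2 [Hd2 H2]]; try lra.
  exists (Rmin d1 d2); split. apply Rmin_pos; auto. intros h Hh Hd.
  pose proof (Rmin_l d1 d2); pose proof (Rmin_r d1 d2).
  specialize (H1 h Hh ltac:(lra)); specialize (H2 h Hh ltac:(lra)); lra.
Qed.

Lemma vanish0_scal c f : 0 <= c -> vanish0 f -> vanish0 (fun h => c * f h).
Proof.
  intros Hc Hf eps He. destruct (Hf (eps/(c+1))) as [d [Hd H]].
  apply Rdiv_lt_0_compat; lra.
  exists d; split; auto; intros h Hh Hhd. specialize (H h Hh Hhd).
  assert (eps / (c+1) * (c+1) = eps) by (field; lra).
  destruct (Rle_dec 0 (f h)). nra. nra.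
Qed.

Lemma vanish0_mul f g : (forall h, 0 <= f h) -> vanish0 f -> vanish0 g -> vanish0 (fun h => f h * g h).
Proof.
  intros Hp Hf Hg eps He. destruct (Hf 1) as [d1 [Hd1 H1]]; try lra.
  destruct (Hg eps) as [d2 [Hd2 H2]]; try lra.
  exists (Rmin d1 d2); split. apply Rmin_pos; auto. intros h Hh Hd.
  pose proof (Rmin_l d1 d2); pose proof (Rmin_r d1 d2).
  specialize (H1 h Hh ltac:(lra)); specialize (H2 h Hh ltac:(lra)). specialize (Hp h).
  destruct (Rle_dec 0 (g h)); nra.
Qed.

Lemma vanish0_le f g d0 : 0 < d0 -> (forall h, h <> 0 -> Rabs h < d0 -> f h <= g h) ->
  vanish0 g -> vanish0 f.
Proof.
  intros Hd0 Hle Hg eps He. destruct (Hg eps He) as [d [Hd H]].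
  exists (Rmin d0 d); split. apply Rmin_pos; auto. intros h Hh Hhd.
  pose proof (Rmin_l d0 d); pose proof (Rmin_r d0 d).
  specialize (H h Hh ltac:(lra)); specialize (Hle h Hh ltac:(lra)); lra.
Qed.

Lemma vanish0_abs : vanish0 Rabs.
Proof. intros eps He; exists eps; split; auto. Qed.

Lemma vanish0_zero : vanish0 (fun _ => 0).
Proof. intros eps He; exists 1; split; auto; lra. Qed.

Definition mlim0 (r c : nat) (F : R -> Mat) (L : Mat) : Prop :=
  vanish0 (fun h => mnorm r c (msub (F h) L)).

Lemma mlim0_const r c A : mlim0 r c (fun _ => A) A.
Proof. unfold mlim0. replace (msub A A) with mzero by m_ring. rewrite mnorm_mz. apply vanish0_zero. Qed.

Lemma mlim0_add r c F G L L' : mlim0 r c F L -> mlim0 r c G L' ->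
  mlim0 r c (fun h => madd (F h) (G h)) (madd L L').
Proof.
  unfold mlim0; intros H1 H2.
  apply (vanish0_le _ (fun h => mnorm r c (msub (F h) L) + mnorm r c (msub (G h) L')) 1 Rlt_0_1).
  intros h _ _. replace (msub (madd (F h) (G h)) (madd L L')) with
    (madd (msub (F h) L) (msub (G h) L')) by m_ring. apply mnorm_add.
  apply vanish0_plus; auto.
Qed.

Lemma mlim0_neg r c F L : mlim0 r c F L -> mlim0 r c (fun h => mneg (F h)) (mneg L).
Proof.
  unfold mlim0; intros H1.
  apply (vanish0_le _ (fun h => mnorm r c (msub (F h) L)) 1 Rlt_0_1); auto.
  intros h _ _. replace (msub (mneg (F h)) (mneg L)) with (mneg (msub (F h) L)) by m_ring.
  rewrite mnorm_neg; lra.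
Qed.

Lemma mlim0_sub r c F G L L' : mlim0 r c F L -> mlim0 r c G L' ->
  mlim0 r c (fun h => msub (F h) (G h)) (msub L L').
Proof. intros. unfold msub at 1. apply mlim0_add; auto. apply mlim0_neg; auto. Qed.

Lemma mlim0_mul r n c F G L L' : mlim0 r n F L -> mlim0 n c G L' ->
  mlim0 r c (fun h => mmul n (F h) (G h)) (mmul n L L').
Proof.
  unfold mlim0; intros H1 H2.
  apply (vanish0_le _ (fun h =>
     mnorm r n (msub (F h) L) * mnorm n c (msub (G h) L') +
     (mnorm n c L' * mnorm r n (msub (F h) L) + mnorm r n L * mnorm n c (msub (G h) L'))) 1 Rlt_0_1).
  - intros h _ _.
    replace (msub (mmul n (F h) (G h)) (mmul n L L')) with
      (madd (mmul n (msub (F h) L) (msub (G h) L'))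
            (madd (mmul n (msub (F h) L) L') (mmul n L (msub (G h) L')))).
    2:{ rewrite !mmul_subl, !mmul_subr. apply mat_ext; intros.
        unfold msub, madd, mneg. C_ring. }
    eapply Rle_trans. apply mnorm_add. eapply Rle_trans. apply Rplus_le_compat_l. apply mnorm_add.
    pose proof (mnorm_mul r n n (msub (F h) L) (msub (G h) L')).
    pose proof (mnorm_mul r n c (msub (F h) L) (msub (G h) L')).
    pose proof (mnorm_mul r n c (msub (F h) L) L').
    pose proof (mnorm_mul r n c L (msub (G h) L')). lra.
  - apply vanish0_plus. apply vanish0_mul; auto. intros; apply mnorm_nonneg.
    apply vanish0_plus; apply vanish0_scal; auto; apply mnorm_nonneg.
Qed.

Lemma mlim0_near r c F G L d0 : 0 < d0 ->
  (forall h, h <> 0 -> Rabs h < d0 -> meq r c (F h) (G h)) ->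
  mlim0 r c F L -> mlim0 r c G L.
Proof.
  unfold mlim0; intros Hd Heq H. apply (vanish0_le _ (fun h => mnorm r c (msub (F h) L)) d0 Hd); auto.
  intros h Hh Hhd. rewrite (mnorm_meq r c _ (msub (F h) L)). lra.
  rewrite Heq; auto. reflexivity.
Qed.

Lemma mlim0_meq r c F L L' : meq r c L L' -> mlim0 r c F L -> mlim0 r c F L'.
Proof.
  unfold mlim0; intros He H. apply (vanish0_le _ (fun h => mnorm r c (msub (F h) L)) 1 Rlt_0_1); auto.
  intros h _ _. rewrite (mnorm_meq r c (msub (F h) L') (msub (F h) L)). lra.
  rewrite He; reflexivity.
Qed.

Definition diffq (F : R -> Mat) (y h : R) : Mat := mrscal (/ h) (msub (F (y + h)) (F y)).
Definition mderiv (r c : nat) (F : R -> Mat) (y : R) (F' : Mat) : Prop := mlim0 r c (diffq F y) F'.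

Lemma mderiv_has_pderiv_y r c G x y F' : mderiv r c (G x) y F' -> has_pderiv_y r c G x y F'.
Proof.
  intros H i j Hi Hj.
  assert (Hent : forall h, h <> 0 -> cnorm (msub (diffq (G x) y h) F' i j) <= mnorm r c (msub (diffq (G x) y h) F'))
    by (intros; apply mnorm_entry; auto).
  split; intros eps He; destruct (H eps He) as [d [Hd Hh]]; exists (mkposreal d Hd);
  intros h Hh0 Hhd; simpl in Hhd; specialize (Hh h Hh0 Hhd); specialize (Hent h Hh0);
  pose proof (Rle_lt_trans _ _ _ Hent Hh) as Hb; clear Hent Hh;
  unfold cnorm, diffq, msub, madd, mneg, mrscal in Hb; C_unfold; cbv beta;
  pose proof (Rabs_pos (/ h * (fst (G x (y + h) i j) + - fst (G x y i j)) + - fst (F' i j)));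
  pose proof (Rabs_pos (/ h * (snd (G x (y + h) i j) + - snd (G x y i j)) + - snd (F' i j))).
  - replace ((Re (G x (y + h) i j) - Re (G x y i j)) / h - Re (F' i j)) with
      (/ h * (fst (G x (y + h) i j) + - fst (G x y i j)) + - fst (F' i j))
      by (unfold Re, Rdiv; ring). lra.
  - replace ((Im (G x (y + h) i j) - Im (G x y i j)) / h - Im (F' i j)) with
      (/ h * (snd (G x (y + h) i j) + - snd (G x y i j)) + - snd (F' i j))
      by (unfold Im, Rdiv; ring). lra.
Qed.

Lemma mderiv_meq r c F y F1 F2 : mderiv r c F y F1 -> meq r c F1 F2 -> mderiv r c F y F2.
Proof. intros H He. eapply mlim0_meq; eauto. Qed.

Lemma mderiv_cont r c F y F' : mderiv r c F y F' -> mlim0 r c (fun h => F (y + h)) (F y).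
Proof.
  unfold mderiv, mlim0; intros H.
  apply (vanish0_le _ (fun h => Rabs h * mnorm r c (msub (diffq F y h) F') + mnorm r c F' * Rabs h) 1 Rlt_0_1).
  - intros h Hh _. replace (msub (F (y + h)) (F y)) with (mrscal h (diffq F y h)).
    rewrite mnorm_rscal. rewrite (Rmult_comm (mnorm r c F')), <- Rmult_plus_distr_l.
    apply Rmult_le_compat_l. apply Rabs_pos.
    replace (diffq F y h) with (madd (msub (diffq F y h) F') F') by m_ring. 
    eapply Rle_trans. apply mnorm_add. replace (madd (msub (diffq F y h) F') F') with (diffq F y h) by m_ring.
    lra. unfold diffq. apply mat_ext; intros; unfold msub, madd, mneg, mrscal. apply C_ext; C_unfold; field; auto.
  - apply vanish0_plus. apply vanish0_mul; auto. intros; apply Rabs_pos. apply vanish0_abs.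
    apply vanish0_scal. apply mnorm_nonneg. apply vanish0_abs.
Qed.

Lemma mlim0_ext r c F G L : (forall h, h <> 0 -> F h = G h) -> mlim0 r c F L -> mlim0 r c G L.
Proof. intros He. apply (mlim0_near r c F G L 1 Rlt_0_1). intros h Hh _. rewrite He; auto; reflexivity. Qed.

Lemma mderiv_const r c A y : mderiv r c (fun _ => A) y mzero.
Proof.
  unfold mderiv. apply (mlim0_ext r c (fun _ => mzero)). intros h _. unfold diffq. m_ring.
  apply mlim0_const.
Qed.

Lemma mderiv_add r c F G y F' G' : mderiv r c F y F' -> mderiv r c G y G' ->
  mderiv r c (fun t => madd (F t) (G t)) y (madd F' G').
Proof.
  unfold mderiv; intros H1 H2. apply (mlim0_ext r c (fun h => madd (diffq F y h) (diffq G y h))).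
  intros h _. unfold diffq. m_ring. apply mlim0_add; auto.
Qed.

Lemma mderiv_sub r c F G y F' G' : mderiv r c F y F' -> mderiv r c G y G' ->
  mderiv r c (fun t => msub (F t) (G t)) y (msub F' G').
Proof.
  unfold mderiv; intros H1 H2. apply (mlim0_ext r c (fun h => msub (diffq F y h) (diffq G y h))).
  intros h _. unfold diffq. m_ring. apply mlim0_sub; auto.
Qed.

Lemma mderiv_mul r n c A B y A' B' : mderiv r n A y A' -> mderiv n c B y B' ->
  mderiv r c (fun t => mmul n (A t) (B t)) y (madd (mmul n A' (B y)) (mmul n (A y) B')).
Proof.
  unfold mderiv; intros H1 H2.
  apply (mlim0_ext r c (fun h => madd (mmul n (diffq A y h) (B (y + h))) (mmul n (A y) (diffq B y h)))).
  - intros h _. unfold diffq. rewrite mmul_scall, mmul_scalr, mmul_subl, mmul_subr.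
    apply mat_ext; intros. unfold msub, madd, mneg, mrscal. C_ring.
  - apply mlim0_add. apply mlim0_mul; auto. apply (mderiv_cont n c B y B'); auto.
    apply mlim0_mul; auto. apply mlim0_const.
Qed.

Lemma inverse_sub n B1 W1 B0 W0 : is_inverse n B1 W1 -> is_inverse n B0 W0 ->
  meq n n (msub W1 W0) (mneg (mmul n (mmul n W1 (msub B1 B0)) W0)).
Proof.
  intros [_ HWB1] [HBW0 _].
  rewrite mmul_subr, mmul_subl, (mmul_assoc n n W1 B0 W0), HWB1, HBW0, mmul1l, mmul1r.
  meq_ring.
Qed.

Lemma inverse_cont n B W eps : 0 < eps -> (forall h, Rabs h < eps -> is_inverse n (B h) (W h)) ->
  mlim0 n n B (B 0) -> mlim0 n n W (W 0).
Proof.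
  intros Heps Hinv HBc. unfold mlim0 in *.
  set (w := mnorm n n (W 0)). assert (0 <= w) by apply mnorm_nonneg.
  destruct (HBc (/(2*w+2))) as [d1 [Hd1 H1]]. { apply Rinv_0_lt_compat; lra. }
  apply (vanish0_le _ (fun h => (2 * (w * w)) * mnorm n n (msub (B h) (B 0))) (Rmin d1 eps)).
  { apply Rmin_pos; auto. }
  - intros h Hh Hhd. pose proof (Rmin_l d1 eps); pose proof (Rmin_r d1 eps).
    specialize (H1 h Hh ltac:(lra)).
    set (beta := mnorm n n (msub (B h) (B 0))) in *.
    set (D := mnorm n n (msub (W h) (W 0))).
    assert (0 <= beta) by apply mnorm_nonneg. assert (0 <= D) by apply mnorm_nonneg.
    assert (ED : D <= mnorm n n (mmul n (mmul n (W h) (msub (B h) (B 0))) (W 0))).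
    { unfold D. rewrite (mnorm_meq _ _ _ _ (inverse_sub n _ _ _ _ (Hinv h ltac:(lra))
        (Hinv 0 ltac:(rewrite Rabs_R0; lra)))), mnorm_neg. lra. }
    assert (HWh : mnorm n n (W h) <= D + w).
    { replace (W h) with (madd (msub (W h) (W 0)) (W 0)) by m_ring. apply mnorm_add. }
    assert (E1 : mnorm n n (mmul n (mmul n (W h) (msub (B h) (B 0))) (W 0)) <= (D + w) * beta * w).
    { eapply Rle_trans. apply mnorm_mul. apply Rmult_le_compat_r; auto.
      eapply Rle_trans. apply mnorm_mul. apply Rmult_le_compat_r; auto. }
    assert (beta * w <= 1/2).
    { assert (beta * (2*w+2) <= 1).
      { apply Rmult_lt_compat_r with (r := 2*w+2) in H1; [|lra].
        rewrite Rinv_l in H1 by lra. lra. }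
      nra. }
    assert (D * (beta * w) <= D * (1/2)) by (apply Rmult_le_compat_l; lra).
    nra.
  - apply vanish0_scal; [nra | auto].
Qed.

Lemma mderiv_inv n B W y B' eps : 0 < eps ->
  (forall h, Rabs h < eps -> is_inverse n (B (y + h)) (W (y + h))) -> mderiv n n B y B' ->
  mderiv n n W y (mneg (mmul n (mmul n (W y) B') (W y))).
Proof.
  intros Heps Hinv HB.
  assert (Hinv0 : is_inverse n (B y) (W y)).
  { rewrite <- (Rplus_0_r y). apply Hinv. rewrite Rabs_R0; lra. }
  assert (HWc : mlim0 n n (fun h => W (y + h)) (W y)).
  { pose proof (inverse_cont n (fun h => B (y + h)) (fun h => W (y + h)) eps Heps Hinv) as Hc.
    cbv beta in Hc. rewrite Rplus_0_r in Hc. exact (Hc (mderiv_cont n n B y B' HB)). }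
  unfold mderiv.
  apply (mlim0_near n n (fun h => mneg (mmul n (mmul n (W (y + h)) (diffq B y h)) (W y))) _ _ eps Heps).
  - intros h Hh Hhd. unfold diffq.
    rewrite (inverse_sub n _ _ _ _ (Hinv h Hhd) Hinv0), mmul_scalr, mmul_scall.
    meq_ring.
  - apply mlim0_neg, mlim0_mul; [apply mlim0_mul; auto | apply mlim0_const].
Qed.

Definition mcvg (r c : nat) (u : nat -> Mat) (L : Mat) : Prop :=
  forall eps, 0 < eps -> exists N0, forall N, (N >= N0)%nat -> mnorm r c (msub (u N) L) < eps.

Lemma rsum_cvg0 n (f : nat -> nat -> R) :
  (forall k, (k < n)%nat -> forall eps, 0 < eps -> exists N0, forall N, (N >= N0)%nat -> f N k < eps) ->
  forall eps, 0 < eps -> exists N0, forall N, (N >= N0)%nat -> rsum n (f N) < eps.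
Proof.
  induction n; intros H eps He. exists O; intros; simpl; lra.
  destruct (IHn (fun k Hk => H k ltac:(lia)) (eps/2)) as [N1 H1]; try lra.
  destruct (H n ltac:(lia) (eps/2)) as [N2 H2]; try lra.
  exists (Nat.max N1 N2); intros N HN. simpl.
  specialize (H1 N ltac:(lia)); specialize (H2 N ltac:(lia)). lra.
Qed.

Lemma is_mexp_mcvg n A E : is_mexp n A E -> mcvg n n (mexp_partial n A) E.
Proof.
  intros H eps He. unfold mnorm.
  apply (rsum_cvg0 n (fun N i => rsum n (fun j => cnorm (msub (mexp_partial n A N) E i j)))); auto.
  intros i Hi eps1 He1.
  apply (rsum_cvg0 n (fun N j => cnorm (msub (mexp_partial n A N) E i j))); auto.
  intros j Hj eps2 He2. destruct (H i j Hi Hj) as [H1 H2].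
  destruct (H1 (eps2/2)) as [N1 G1]; try lra. destruct (H2 (eps2/2)) as [N2 G2]; try lra.
  exists (Nat.max N1 N2); intros N HN.
  specialize (G1 N ltac:(lia)); specialize (G2 N ltac:(lia)). unfold Rdist in *.
  unfold cnorm, msub, madd, mneg. C_unfold. unfold Re, Im in *. unfold Rminus in *. lra.
Qed.

Lemma mrscal_sub a X Y : mrscal a (msub X Y) = msub (mrscal a X) (mrscal a Y).
Proof. m_ring. Qed.

Lemma mrscal_mrscal a b X : mrscal a (mrscal b X) = mrscal (a * b) X.
Proof. m_ring. Qed.

Lemma mpow_commute n P A k : meq n n (mmul n P A) (mmul n A P) ->
  meq n n (mmul n P (mpow n A k)) (mmul n (mpow n A k) P).
Proof.
  intros H; induction k; simpl. rewrite mmul1l, mmul1r; reflexivity.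
  rewrite <- mmul_assoc, H, !mmul_assoc, IHk. reflexivity.
Qed.

Lemma mexp_partial_commute n P A N : meq n n (mmul n P A) (mmul n A P) ->
  meq n n (mmul n P (mexp_partial n A N)) (mmul n (mexp_partial n A N) P).
Proof.
  intros H; induction N; simpl. rewrite mmul1l, mmul1r; reflexivity.
  rewrite mmul_addr, mmul_addl, mmul_scalr, mmul_scall, IHN, (mpow_commute n P A (S N) H). reflexivity.
Qed.

Lemma is_mexp_commute n P A X : meq n n (mmul n P A) (mmul n A P) -> is_mexp n A X ->
  meq n n (mmul n P X) (mmul n X P).
Proof.
  intros H HX. apply msub_zero_meq, mnorm_zero_meq.
  apply Rle_antisym; [| apply mnorm_nonneg]. apply Rle_plus_epsilon; intros eps He.
  destruct (is_mexp_mcvg n A X HX (eps / (2 * mnorm n n P + 1))) as [N0 HN].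
  apply Rdiv_lt_0_compat; auto. pose proof (mnorm_nonneg n n P); lra.
  specialize (HN N0 ltac:(lia)). set (E := mexp_partial n A N0) in *.
  assert (Heq : meq n n (msub (mmul n P X) (mmul n X P))
     (madd (mneg (mmul n P (msub E X))) (mmul n (msub E X) P))).
  { unfold E. rewrite mmul_subr, mmul_subl. rewrite (mexp_partial_commute n P A N0 H).
    intros i j _ _; unfold msub, madd, mneg; C_ring. }
  rewrite (mnorm_meq _ _ _ _ Heq).
  eapply Rle_trans. apply mnorm_add. rewrite mnorm_neg.
  pose proof (mnorm_mul n n n P (msub E X)); pose proof (mnorm_mul n n n (msub E X) P).
  pose proof (mnorm_nonneg n n P). pose proof (mnorm_nonneg n n (msub E X)).
  assert (mnorm n n (msub E X) * (2 * mnorm n n P + 1) <= eps).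
  { apply Rmult_lt_compat_r with (r := 2 * mnorm n n P + 1) in HN; [|lra].
    unfold Rdiv in HN. rewrite Rmult_assoc, Rinv_l in HN by lra. lra. }
  nra.
Qed.

Lemma mnorm_mpow n A k c : mnorm n n A <= c -> mnorm n n (mpow n A k) <= mnorm n n mid * c ^ k.
Proof.
  intros H. assert (0 <= c) by (pose proof (mnorm_nonneg n n A); lra).
  induction k; simpl. lra. eapply Rle_trans. apply mnorm_mul.
  pose proof (mnorm_nonneg n n (mpow n A k)). pose proof (mnorm_nonneg n n mid).
  pose proof (pow_le c k H0). nra.
Qed.

Lemma INR_le_pow2 k : INR k <= 2 ^ k.
Proof. induction k. simpl; lra. rewrite S_INR. simpl. pose proof (pow_R1_Rle 2 k ltac:(lra)). lra. Qed.

Lemma INR_sq_le_pow4 k : INR k ^ 2 <= 4 ^ k.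
Proof.
  replace 4 with (2 * 2) by lra. rewrite Rpow_mult_distr. pose proof (INR_le_pow2 k).
  pose proof (pos_INR k). simpl. nra.
Qed.

Lemma exp_partial_sum_le z N : 0 <= z -> sum_f_R0 (fun k => / INR (fact k) * z ^ k) N <= exp z.
Proof.
  intros Hz. apply (growing_ineq (E1 z)); [| apply E1_cvg].
  intros m. unfold E1. rewrite tech5. pose proof (pow_le z (S m) Hz).
  pose proof (INR_fact_lt_0 (S m)). assert (0 <= / INR (fact (S m))).
  apply Rlt_le, Rinv_0_lt_compat; lra. nra.
Qed.

(* Second-order remainders of (A0 + h B)^k and of the exponential series.  For commuting
   A0, B the k-th one is bounded by k^2 h^2 |B|^2 |I| c^k with c = |A0| + |B| + 1; as
   k^2 <= 4^k, the series of remainders is bounded by h^2 |B|^2 |I| exp(4 c). *)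
Definition pow_incr n (A0 B : Mat) (h : R) k : Mat := msub (mpow n (madd A0 (mrscal h B)) k) (mpow n A0 k).
Definition pow_rem2 n (A0 B : Mat) (h : R) k : Mat :=
  msub (pow_incr n A0 B h k) (mrscal (INR k * h) (mmul n B (mpow n A0 (pred k)))).
Definition exp_rem2 n (A0 B : Mat) (h : R) N : Mat :=
  msub (msub (mexp_partial n (madd A0 (mrscal h B)) (S N)) (mexp_partial n A0 (S N)))
       (mrscal h (mmul n B (mexp_partial n A0 N))).

Lemma pow_incr_S n A0 B h k : pow_incr n A0 B h (S k) =
  madd (mmul n (madd A0 (mrscal h B)) (pow_incr n A0 B h k)) (mmul n (mrscal h B) (mpow n A0 k)).
Proof. unfold pow_incr; cbn [mpow]. rewrite mmul_subr, !mmul_addl, !mmul_scall. m_ring. Qed.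

Lemma pow_rem2_S n A0 B h k : pow_rem2 n A0 B h (S k) =
  madd (madd (mmul n A0 (pow_rem2 n A0 B h k)) (mmul n (mrscal h B) (pow_incr n A0 B h k)))
   (mrscal (INR k * h) (msub (mmul n A0 (mmul n B (mpow n A0 (pred k)))) (mmul n B (mpow n A0 k)))).
Proof.
  unfold pow_rem2. rewrite pow_incr_S. unfold pow_incr. cbn [pred].
  rewrite ?mmul_subr, ?mmul_subl, ?mmul_addl, ?mmul_addr, ?mmul_scall, ?mmul_scalr, ?mmul_assoc.
  rewrite S_INR. m_ring.
Qed.

Lemma exp_rem2_S n A0 B h N : exp_rem2 n A0 B h (S N) =
  madd (exp_rem2 n A0 B h N) (mrscal (/ INR (fact (S (S N)))) (pow_rem2 n A0 B h (S (S N)))).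
Proof.
  unfold exp_rem2, pow_rem2, pow_incr. cbn [mexp_partial pred].
  rewrite !mmul_addr, !mmul_scalr, !mrscal_sub, !mrscal_mrscal.
  assert (Hf : / INR (fact (S (S N))) * (INR (S (S N)) * h) = h * / INR (fact (S N))).
  { replace (fact (S (S N))) with (S (S N) * fact (S N))%nat by reflexivity.
    rewrite mult_INR. field. split. apply INR_fact_neq_0. apply not_0_INR; lia. }
  rewrite Hf. m_ring.
Qed.

Lemma exp_rem2_0 n A0 B h : exp_rem2 n A0 B h 0 = mzero.
Proof.
  unfold exp_rem2. cbn [mexp_partial mpow].
  replace (/ INR (fact 1)) with 1 by (simpl; field).
  rewrite !mmul_addl, !mmul_scall. m_ring.
Qed.

Lemma pow_rem2_0 n A0 B h : pow_rem2 n A0 B h 0 = mzero.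
Proof. unfold pow_rem2, pow_incr. cbn [mpow]. change (INR 0) with 0. m_ring. Qed.

Lemma sum_f_R0_nonneg f N : (forall k, 0 <= f k) -> 0 <= sum_f_R0 f N.
Proof. intros H; induction N; simpl. apply H. pose proof (H (S N)); lra. Qed.

Lemma mnorm_add_scal_le n A0 B h : Rabs h <= 1 ->
  mnorm n n (madd A0 (mrscal h B)) <= mnorm n n A0 + mnorm n n B + 1.
Proof.
  intros Hh. eapply Rle_trans. apply mnorm_add. rewrite mnorm_rscal.
  pose proof (mnorm_nonneg n n B). pose proof (Rabs_pos h). nra.
Qed.

Lemma mnorm_pow_incr n A0 B h k : Rabs h <= 1 ->
  mnorm n n (pow_incr n A0 B h k) <= INR k * (Rabs h * mnorm n n B * mnorm n n mid) *
     (mnorm n n A0 + mnorm n n B + 1) ^ k.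
Proof.
  intros Hh. set (c := mnorm n n A0 + mnorm n n B + 1).
  assert (Ha : 0 <= mnorm n n A0) by apply mnorm_nonneg. assert (Hb : 0 <= mnorm n n B) by apply mnorm_nonneg.
  assert (Hm : 0 <= mnorm n n mid) by apply mnorm_nonneg. assert (Hc : 1 <= c) by (unfold c; lra).
  pose proof (Rabs_pos h).
  set (t := Rabs h * mnorm n n B * mnorm n n mid). assert (Ht : 0 <= t) by (unfold t; repeat apply Rmult_le_pos; auto).
  induction k.
  - unfold pow_incr. cbn [mpow]. replace (msub mid mid) with mzero by m_ring. rewrite mnorm_mz. simpl. lra.
  - rewrite pow_incr_S. eapply Rle_trans. apply mnorm_add.
    pose proof (mnorm_mul n n n (madd A0 (mrscal h B)) (pow_incr n A0 B h k)) as G1.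
    pose proof (mnorm_mul n n n (mrscal h B) (mpow n A0 k)) as G2.
    pose proof (mnorm_add_scal_le n A0 B h Hh) as G3. fold c in G3.
    pose proof (mnorm_mpow n A0 k c ltac:(unfold c; lra)) as G4.
    rewrite mnorm_rscal in G2. pose proof (mnorm_nonneg n n (pow_incr n A0 B h k)).
    pose proof (mnorm_nonneg n n (mpow n A0 k)).
    assert (Hck : 1 <= c ^ k) by (apply pow_R1_Rle; lra).
    pose proof (pos_INR k). rewrite S_INR. simpl.
    assert (mnorm n n (madd A0 (mrscal h B)) * mnorm n n (pow_incr n A0 B h k) <= c * (INR k * t * c ^ k)).
    { apply Rmult_le_compat; auto. apply mnorm_nonneg. }
    assert (Rabs h * mnorm n n B * mnorm n n (mpow n A0 k) <= t * c ^ k).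
    { apply Rle_trans with (Rabs h * mnorm n n B * (mnorm n n mid * c ^ k)).
      apply Rmult_le_compat_l. apply Rmult_le_pos; auto. exact G4. unfold t; right; ring. }
    assert (t * c ^ k <= t * (c * c ^ k)).
    { apply Rmult_le_compat_l; auto. nra. }
    nra.
Qed.

Lemma mnorm_pow_rem2 n A0 B h k : Rabs h <= 1 -> meq n n (mmul n A0 B) (mmul n B A0) ->
  mnorm n n (pow_rem2 n A0 B h k) <= INR k ^ 2 * (Rabs h * Rabs h * mnorm n n B * mnorm n n B * mnorm n n mid) *
     (mnorm n n A0 + mnorm n n B + 1) ^ k.
Proof.
  intros Hh Hcomm. set (c := mnorm n n A0 + mnorm n n B + 1).
  assert (Ha : 0 <= mnorm n n A0) by apply mnorm_nonneg. assert (Hb : 0 <= mnorm n n B) by apply mnorm_nonneg.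
  assert (Hm : 0 <= mnorm n n mid) by apply mnorm_nonneg. assert (Hc : 1 <= c) by (unfold c; lra).
  pose proof (Rabs_pos h).
  set (s := Rabs h * Rabs h * mnorm n n B * mnorm n n B * mnorm n n mid).
  assert (Hs : 0 <= s) by (unfold s; repeat apply Rmult_le_pos; auto).
  induction k.
  - rewrite pow_rem2_0, mnorm_mz. simpl. lra.
  - rewrite pow_rem2_S. eapply Rle_trans. apply mnorm_add.
    assert (Hcorr : mnorm n n (mrscal (INR k * h) (msub (mmul n A0 (mmul n B (mpow n A0 (pred k))))
                     (mmul n B (mpow n A0 k)))) = 0).
    { rewrite mnorm_rscal. destruct k. simpl. rewrite Rmult_0_l, Rabs_R0. lra.
      cbn [pred mpow]. rewrite (mnorm_meq _ _ _ mzero). rewrite mnorm_mz; lra.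
      rewrite <- mmul_assoc, Hcomm, mmul_assoc. intros i j _ _; unfold msub, madd, mneg, mzero; C_ring. }
    rewrite Hcorr. eapply Rle_trans. apply Rplus_le_compat_r. apply mnorm_add.
    pose proof (mnorm_mul n n n A0 (pow_rem2 n A0 B h k)) as G1.
    pose proof (mnorm_mul n n n (mrscal h B) (pow_incr n A0 B h k)) as G2. rewrite mnorm_rscal in G2.
    pose proof (mnorm_pow_incr n A0 B h k Hh) as G3. fold c in G3.
    pose proof (mnorm_nonneg n n (pow_rem2 n A0 B h k)). pose proof (mnorm_nonneg n n (pow_incr n A0 B h k)).
    assert (Hck : 1 <= c ^ k) by (apply pow_R1_Rle; lra).
    pose proof (pos_INR k). rewrite S_INR. simpl.
    assert (E1 : mnorm n n A0 * mnorm n n (pow_rem2 n A0 B h k) <= c * (INR k ^ 2 * s * c ^ k)).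
    { apply Rmult_le_compat; auto. unfold c; lra. }
    assert (E2 : Rabs h * mnorm n n B * mnorm n n (pow_incr n A0 B h k) <= INR k * s * c ^ k).
    { apply Rle_trans with (Rabs h * mnorm n n B * (INR k * (Rabs h * mnorm n n B * mnorm n n mid) * c ^ k)).
      apply Rmult_le_compat_l; auto. apply Rmult_le_pos; auto. unfold s; right; ring. }
    assert (E3 : INR k * s * c ^ k <= INR k * s * (c * c ^ k)).
    { apply Rmult_le_compat_l. apply Rmult_le_pos; auto. nra. }
    simpl in E1. set (u := INR k) in *. set (v := s * (c * c ^ k)).
    assert (Hv : 0 <= v) by (unfold v; apply Rmult_le_pos; auto; nra).
    assert (c * (u * (u * 1) * s * c ^ k) = u * u * v) by (unfold v; ring).
    assert (u * s * (c * c ^ k) = u * v) by (unfold v; ring).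
    assert ((u + 1) * ((u + 1) * 1) * s * (c * c ^ k) = (u+1)*(u+1)*v) by (unfold v; ring).
    assert (0 <= (u + 1) * v) by (apply Rmult_le_pos; lra).
    nra.
Qed.

Lemma mnorm_exp_rem2 n A0 B h N : Rabs h <= 1 -> meq n n (mmul n A0 B) (mmul n B A0) ->
  mnorm n n (exp_rem2 n A0 B h N) <= (Rabs h * Rabs h * mnorm n n B * mnorm n n B * mnorm n n mid) *
     sum_f_R0 (fun k => / INR (fact k) * (4 * (mnorm n n A0 + mnorm n n B + 1)) ^ k) (S N).
Proof.
  intros Hh Hcomm. set (c := mnorm n n A0 + mnorm n n B + 1).
  assert (Ha : 0 <= mnorm n n A0) by apply mnorm_nonneg. assert (Hb : 0 <= mnorm n n B) by apply mnorm_nonneg.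
  assert (Hm : 0 <= mnorm n n mid) by apply mnorm_nonneg. assert (Hc : 1 <= c) by (unfold c; lra).
  pose proof (Rabs_pos h).
  set (s := Rabs h * Rabs h * mnorm n n B * mnorm n n B * mnorm n n mid).
  assert (Hs : 0 <= s) by (unfold s; repeat apply Rmult_le_pos; auto).
  assert (Hterm : forall k, 0 <= / INR (fact k) * (4 * c) ^ k).
  { intros k. apply Rmult_le_pos. apply Rlt_le, Rinv_0_lt_compat, INR_fact_lt_0.
    apply pow_le; lra. }
  induction N.
  - rewrite exp_rem2_0, mnorm_mz. apply Rmult_le_pos; auto. apply sum_f_R0_nonneg; auto.
  - rewrite exp_rem2_S. eapply Rle_trans. apply mnorm_add. rewrite mnorm_rscal.
    rewrite (tech5 _ (S N)).
    pose proof (mnorm_pow_rem2 n A0 B h (S (S N)) Hh Hcomm) as H0. fold c s in H0.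
    pose proof (INR_sq_le_pow4 (S (S N))).
    assert (Hf : 0 < / INR (fact (S (S N)))) by apply Rinv_0_lt_compat, INR_fact_lt_0.
    rewrite Rabs_right by lra.
    assert (mnorm n n (pow_rem2 n A0 B h (S (S N))) <= s * (4 * c) ^ (S (S N))).
    { eapply Rle_trans. apply H0. rewrite Rpow_mult_distr.
      pose proof (pow_le c (S (S N)) ltac:(lra)).
      replace (INR (S (S N)) ^ 2 * s * c ^ S (S N)) with (INR (S (S N)) ^ 2 * (s * c ^ S (S N))) by ring.
      replace (s * (4 ^ S (S N) * c ^ S (S N))) with (4 ^ S (S N) * (s * c ^ S (S N))) by ring.
      apply Rmult_le_compat_r. apply Rmult_le_pos; auto. apply INR_sq_le_pow4. }
    assert (/ INR (fact (S (S N))) * mnorm n n (pow_rem2 n A0 B h (S (S N))) <=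
            s * (/ INR (fact (S (S N))) * (4 * c) ^ S (S N))).
    { rewrite <- Rmult_assoc, (Rmult_comm s), Rmult_assoc. apply Rmult_le_compat_l; lra. }
    lra.
Qed.

Lemma mnorm_exp_rem2_le n A0 B h N : Rabs h <= 1 -> meq n n (mmul n A0 B) (mmul n B A0) ->
  mnorm n n (exp_rem2 n A0 B h N) <= Rabs h * Rabs h *
    (mnorm n n B * mnorm n n B * mnorm n n mid * exp (4 * (mnorm n n A0 + mnorm n n B + 1))).
Proof.
  intros Hh Hcomm. set (c := mnorm n n A0 + mnorm n n B + 1).
  assert (Hc : 1 <= c) by (unfold c; pose proof (mnorm_nonneg n n A0); pose proof (mnorm_nonneg n n B); lra).
  eapply Rle_trans; [apply (mnorm_exp_rem2 n A0 B h N Hh Hcomm)|].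
  replace (Rabs h * Rabs h * (mnorm n n B * mnorm n n B * mnorm n n mid * exp (4 * c))) with
    (Rabs h * Rabs h * mnorm n n B * mnorm n n B * mnorm n n mid * exp (4 * c)) by ring.
  apply Rmult_le_compat_l; [|apply exp_partial_sum_le; lra].
  pose proof (Rabs_pos h). pose proof (mnorm_nonneg n n B). pose proof (mnorm_nonneg n n mid).
  repeat apply Rmult_le_pos; auto.
Qed.

Lemma mexp_line_second_order n A0 B X0 X h : Rabs h <= 1 ->
  meq n n (mmul n A0 B) (mmul n B A0) -> is_mexp n A0 X0 -> is_mexp n (madd A0 (mrscal h B)) X ->
  mnorm n n (msub (msub X X0) (mrscal h (mmul n B X0))) <= Rabs h * Rabs h *
    (mnorm n n B * mnorm n n B * mnorm n n mid * exp (4 * (mnorm n n A0 + mnorm n n B + 1))).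
Proof.
  intros Hh Hcomm HX0 HX. pose proof (mnorm_nonneg n n B) as Hb. pose proof (Rabs_pos h).
  apply Rle_plus_epsilon; intros eps He.
  destruct (is_mexp_mcvg _ _ _ HX (eps/3)) as [N1 G1]; try lra.
  destruct (is_mexp_mcvg _ _ _ HX0 (eps/3)) as [N2 G2]; try lra.
  destruct (is_mexp_mcvg _ _ _ HX0 (eps/(3 * (mnorm n n B + 1)))) as [N3 G3].
  { apply Rdiv_lt_0_compat; lra. }
  set (N := Nat.max N1 (Nat.max N2 N3)).
  specialize (G1 (S N) ltac:(unfold N; lia)). specialize (G2 (S N) ltac:(unfold N; lia)).
  specialize (G3 N ltac:(unfold N; lia)).
  replace (msub (msub X X0) (mrscal h (mmul n B X0))) with
    (madd (exp_rem2 n A0 B h N) (madd (mneg (msub (mexp_partial n (madd A0 (mrscal h B)) (S N)) X))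
      (madd (msub (mexp_partial n A0 (S N)) X0) (mrscal h (mmul n B (msub (mexp_partial n A0 N) X0))))))
    by (unfold exp_rem2; rewrite mmul_subr; m_ring).
  pose proof (mnorm_exp_rem2_le n A0 B h N Hh Hcomm) as HY.
  eapply Rle_trans. apply mnorm_add. eapply Rle_trans. apply Rplus_le_compat_l. apply mnorm_add.
  eapply Rle_trans. apply Rplus_le_compat_l. apply Rplus_le_compat_l. apply mnorm_add.
  rewrite mnorm_neg, mnorm_rscal.
  assert (G4 : mnorm n n B * mnorm n n (msub (mexp_partial n A0 N) X0) <= eps / 3).
  { apply Rle_trans with ((mnorm n n B + 1) * (eps / (3 * (mnorm n n B + 1)))).
    - apply Rmult_le_compat; try lra; apply mnorm_nonneg.
    - right; field; lra. }
  pose proof (mnorm_mul n n n B (msub (mexp_partial n A0 N) X0)).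
  assert (Rabs h * mnorm n n (mmul n B (msub (mexp_partial n A0 N) X0)) <= eps / 3).
  { apply Rle_trans with (1 * (eps/3)); [apply Rmult_le_compat; auto; [apply mnorm_nonneg|lra] | lra]. }
  lra.
Qed.

Lemma mexp_line_deriv n A0 B X0 (X : R -> Mat) :
  meq n n (mmul n A0 B) (mmul n B A0) -> is_mexp n A0 X0 ->
  (forall h, is_mexp n (madd A0 (mrscal h B)) (X h)) ->
  mlim0 n n (fun h => mrscal (/ h) (msub (X h) X0)) (mmul n B X0).
Proof.
  intros Hcomm HX0 HX.
  set (K := mnorm n n B * mnorm n n B * mnorm n n mid * exp (4 * (mnorm n n A0 + mnorm n n B + 1))).
  assert (HK : 0 <= K).
  { pose proof (mnorm_nonneg n n B). pose proof (mnorm_nonneg n n mid). pose proof (exp_pos (4 * (mnorm n n A0 + mnorm n n B + 1))).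
    unfold K; repeat apply Rmult_le_pos; lra. }
  unfold mlim0. apply (vanish0_le _ (fun h => K * Rabs h) 1 Rlt_0_1).
  - intros h Hh Hh1.
    replace (msub (mrscal (/ h) (msub (X h) X0)) (mmul n B X0)) with
      (mrscal (/ h) (msub (msub (X h) X0) (mrscal h (mmul n B X0)))).
    2:{ apply mat_ext; intros; unfold msub, madd, mneg, mrscal. apply C_ext; C_unfold; field; auto. }
    rewrite mnorm_rscal, Rabs_inv.
    pose proof (mexp_line_second_order n A0 B X0 (X h) h ltac:(lra) Hcomm HX0 (HX h)). fold K in H.
    pose proof (Rabs_pos_lt h Hh).
    apply Rle_trans with (/ Rabs h * (Rabs h * Rabs h * K)).
    + apply Rmult_le_compat_l; auto. apply Rlt_le, Rinv_0_lt_compat; auto.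
    + right; field; lra.
  - apply vanish0_scal; auto. apply vanish0_abs.
Qed.

Lemma mmulCA_of_commute n A B X : meq n n (mmul n A B) (mmul n B A) ->
  meq n n (mmul n A (mmul n B X)) (mmul n B (mmul n A X)).
Proof. intros H. rewrite <- !mmul_assoc, H. reflexivity. Qed.

Definition anticomm n (A B : Mat) : Mat := madd (mmul n A B) (mmul n B A).
Definition qy_core n (T Z : Mat) : Mat := msub (mmul n Z (mmul n T Z)) T.

Section Resolvent.

Variables (n : nat) (Z W : Mat).
Hypothesis WQ : meq n n (mmul n W (madd mid (mmul n Z Z))) mid.
Hypothesis QW : meq n n (mmul n (madd mid (mmul n Z Z)) W) mid.

Lemma resolvent_commute : meq n n (mmul n Z W) (mmul n W Z).
Proof.
  assert (H1 : meq n n (mmul n Z W) (mmul n (mmul n W (madd mid (mmul n Z Z))) (mmul n Z W))).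
  { rewrite WQ, mmul1l. reflexivity. }
  assert (H2 : meq n n (mmul n W Z) (mmul n W (mmul n Z (mmul n (madd mid (mmul n Z Z)) W)))).
  { rewrite QW, mmul1r. reflexivity. }
  rewrite H1, H2. mexpand. rewrite !mmul1l. reflexivity.
Qed.

Lemma resolvent_sqr X : meq n n (mmul n W (mmul n Z (mmul n Z X))) (msub X (mmul n W X)).
Proof.
  transitivity (msub (mmul n W (mmul n (madd mid (mmul n Z Z)) X)) (mmul n W (mmul n mid X))).
  - mexpand; meq_ring.
  - rewrite (mmulKl n W _ _ WQ), mmul1l. reflexivity.
Qed.

Lemma sqr_resolvent X : meq n n (mmul n Z (mmul n Z (mmul n W X))) (msub X (mmul n W X)).
Proof.
  transitivity (msub (mmul n (madd mid (mmul n Z Z)) (mmul n W X)) (mmul n mid (mmul n W X))).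
  - mexpand; meq_ring.
  - rewrite (mmulKl n _ W _ QW), mmul1l. reflexivity.
Qed.

Variables (S T : Mat).
Lemma resolvent_anticomm_sandwich :
  meq n n (madd (mmul n Z (mmul n W (mmul n (anticomm n S Z) (mmul n W Z))))
                (mmul n W (mmul n (anticomm n S Z) W)))
          (madd (mmul n Z (mmul n W S)) (mmul n S (mmul n W Z))).
Proof.
  pose proof resolvent_commute as ZW.
  set (Q := madd mid (mmul n Z Z)) in *.
  transitivity (madd (mmul n W (mmul n Q (mmul n S (mmul n Z W))))
                     (mmul n W (mmul n Z (mmul n S (mmul n Q W))))).
  - unfold anticomm. mexpand. rewrite <- ZW.
    rewrite (mmulCA_of_commute n Z W (mmul n S (mmul n Z (mmul n Z W))) ZW).
    rewrite (mmulCA_of_commute n Z W (mmul n Z (mmul n S (mmul n Z W))) ZW).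
    unfold Q. mexpand. rewrite !mmul1l. meq_ring.
  - rewrite (mmulKl n W Q _ WQ), QW, mmul1r.
    rewrite (mmulCA_of_commute n Z W S ZW), <- ZW. meq_ring.
Qed.

Hypothesis ST : meq n n (mmul n S T) mid.
Hypothesis TS : meq n n (mmul n T S) mid.

Lemma qy_py_core_identity :
  meq n n (madd (mmul n (qy_core n T Z) (mmul n W (mmul n (anticomm n S Z) (mmul n W (qy_core n T Z)))))
                (mmul n (anticomm n T Z) (mmul n W (mmul n (anticomm n S Z) (mmul n W (anticomm n T Z))))))
          (anticomm n T Z).
Proof.
  pose proof resolvent_commute as ZW.
  set (E := anticomm n S Z). set (a := qy_core n T Z). set (b := anticomm n T Z).
  assert (Hb : meq n n b (mmul n T (mmul n E T))).
  { unfold E, anticomm. mexpand. rewrite (mmulKl n T S _ TS), ST, mmul1r. unfold b, anticomm; meq_ring. }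
  assert (HaW : forall X, meq n n (mmul n a (mmul n W X))
      (msub (mmul n T (mmul n E (mmul n T (mmul n Z (mmul n W X))))) (mmul n T X))).
  { intros X. unfold E, anticomm. mexpand. rewrite (mmulKl n T S _ TS), (mmulKl n S T _ ST).
    rewrite (sqr_resolvent X). unfold a, qy_core. mexpand. meq_ring. }
  assert (HWa : meq n n (mmul n W a) (msub (mmul n W (mmul n Z (mmul n T (mmul n E T)))) T)).
  { unfold E, anticomm. mexpand. rewrite (mmulKl n T S _ TS), ST, mmul1r.
    rewrite (resolvent_sqr T). unfold a, qy_core. mexpand. meq_ring. }
  assert (Hmid : meq n n (mmul n T (mmul n (madd (mmul n Z (mmul n W (mmul n E (mmul n W Z))))
       (mmul n W (mmul n E W))) T)) (madd (mmul n T (mmul n Z W)) (mmul n W (mmul n Z T)))).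
  { unfold E. rewrite resolvent_anticomm_sandwich. mexpand.
    rewrite ST, mmul1r, (mmulKl n T S _ TS). meq_ring. }
  rewrite (HaW (mmul n E (mmul n W a))), HWa, Hb.
  transitivity (madd (msub (mmul n T (mmul n E (mmul n (mmul n T (mmul n (madd (mmul n Z (mmul n W (mmul n E (mmul n W Z))))
       (mmul n W (mmul n E W))) T)) (mmul n E T))))
       (mmul n T (mmul n E (mmul n (madd (mmul n T (mmul n Z W)) (mmul n W (mmul n Z T))) (mmul n E T)))))
       (mmul n T (mmul n E T))).
  - mexpand. meq_ring.
  - rewrite Hmid. meq_ring.
Qed.

End Resolvent.

Definition sandwich n (U X W c V : Mat) : Mat :=
  mmul n U (mmul n (mmul n X (mmul n W (mmul n c W))) V).

Lemma sandwich_mul m n U X W a b V :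
  mmul m (sandwich n U X W a V) (sandwich n U X W b V) =
  mmul n U (mmul n (mmul n (mmul n X (mmul n W (mmul n a W)))
                           (mmul n (mmul m V U) (mmul n X (mmul n W (mmul n b W))))) V).
Proof. unfold sandwich. rewrite !mmul_assoc. reflexivity. Qed.

Lemma sandwich_core_sq_add n X W G E a b :
  (forall Y, meq n n (mmul n G (mmul n X Y)) (mmul n E Y)) ->
  meq n n (madd (mmul n a (mmul n W (mmul n E (mmul n W a))))
                (mmul n b (mmul n W (mmul n E (mmul n W b))))) b ->
  meq n n (madd (mmul n (mmul n X (mmul n W (mmul n a W))) (mmul n G (mmul n X (mmul n W (mmul n a W)))))
                (mmul n (mmul n X (mmul n W (mmul n b W))) (mmul n G (mmul n X (mmul n W (mmul n b W))))))
          (mmul n X (mmul n W (mmul n b W))).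
Proof.
  intros GX core. mexpand. rewrite !GX.
  transitivity (mmul n X (mmul n W (mmul n (madd (mmul n a (mmul n W (mmul n E (mmul n W a))))
                (mmul n b (mmul n W (mmul n E (mmul n W b))))) W))).
  - mexpand. meq_ring.
  - rewrite core. reflexivity.
Qed.

Section Solution.

Variables (m M : nat) (S T U V K : Mat) (p0 : R -> Mat) (Xi W : R -> R -> Mat).
Variable Dom : R -> R -> Prop.
Hypothesis ST : meq M M (mmul M S T) mid.
Hypothesis TS : meq M M (mmul M T S) mid.
Hypothesis sylvester : meq M M (anticomm M S K) (mmul m V U).
Hypothesis Xi_exp : forall x y, is_mexp M (mneg (madd (mrscal x S) (mrscal y T))) (Xi x y).
Hypothesis Dom_open : open2 Dom.
Hypothesis W_inv : forall x y, Dom x y ->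
  is_inverse M (madd mid (mpow M (mmul M K (Xi x y)) 2)) (W x y).
Variables (x y : R).
Hypothesis Dom_xy : Dom x y.

Local Notation X0 := (Xi x y).
Local Notation W0 := (W x y).
Local Notation Z0 := (mmul M K (Xi x y)).

Lemma Xi_commute P : meq M M (mmul M P S) (mmul M S P) -> meq M M (mmul M P T) (mmul M T P) ->
  meq M M (mmul M P X0) (mmul M X0 P).
Proof.
  intros PS PT. apply (is_mexp_commute M P (mneg (madd (mrscal x S) (mrscal y T)))); [|apply Xi_exp].
  rewrite ?mmul_negr, ?mmul_negl, ?mmul_addr, ?mmul_addl, ?mmul_scalr, ?mmul_scall, PS, PT.
  reflexivity.
Qed.

Lemma S_Xi_commute : meq M M (mmul M S X0) (mmul M X0 S).
Proof. apply Xi_commute; [reflexivity | rewrite ST, TS; reflexivity]. Qed.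

Lemma T_Xi_commute : meq M M (mmul M T X0) (mmul M X0 T).
Proof. apply Xi_commute; [rewrite ST, TS; reflexivity | reflexivity]. Qed.

Lemma Xi_deriv_y : mderiv M M (Xi x) y (mmul M (mneg T) X0).
Proof.
  apply (mexp_line_deriv M (mneg (madd (mrscal x S) (mrscal y T))) (mneg T) X0
           (fun h => Xi x (y + h))); [| apply Xi_exp |].
  - rewrite ?mmul_negr, ?mmul_negl, ?mmul_addr, ?mmul_addl, ?mmul_scalr, ?mmul_scall, ST, TS.
    reflexivity.
  - intros h. replace (madd (mneg (madd (mrscal x S) (mrscal y T))) (mrscal h (mneg T)))
      with (mneg (madd (mrscal x S) (mrscal (y + h) T))) by m_ring.
    apply Xi_exp.
Qed.

Lemma W_deriv_y : mderiv M M (W x) y (mmul M W0 (mmul M (mmul M Z0 (anticomm M T Z0)) W0)).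
Proof.
  destruct (Dom_open x y Dom_xy) as [eps [Heps Hball]].
  assert (Hnear : forall h, Rabs h < eps -> Dom x (y + h)).
  { intros h Hh. apply Hball. unfold Rabs in Hh. destruct (Rcase_abs h); nra. }
  pose proof (mderiv_mul M M M (fun _ => K) (Xi x) y _ _ (mderiv_const M M K y) Xi_deriv_y) as HdZ.
  pose proof (mderiv_mul M M M (fun t => mmul M K (Xi x t)) (fun _ => mid) y _ _ HdZ
                (mderiv_const M M mid y)) as HdZ1.
  pose proof (mderiv_mul M M M (fun t => mmul M K (Xi x t))
                (fun t => mmul M (mmul M K (Xi x t)) mid) y _ _ HdZ HdZ1) as HdZ2.
  pose proof (mderiv_add M M (fun _ => mid) _ y _ _ (mderiv_const M M mid y) HdZ2) as HdQ.
  eapply mderiv_meq.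
  - exact (mderiv_inv M (fun t => madd mid (mpow M (mmul M K (Xi x t)) 2)) (W x) y _ eps Heps
             (fun h Hh => W_inv x (y + h) (Hnear h Hh)) HdQ).
  - rewrite ?mmul0l, ?mmul0r, ?madd0l, ?madd0r, ?mmul_negl, ?mmul_negr, !mmul1r.
    rewrite T_Xi_commute. unfold anticomm. mexpand. meq_ring.
Qed.

Lemma q_deriv_y : mderiv m m (q_sol M U V Xi W x) y (sandwich M U X0 W0 (qy_core M T Z0) V).
Proof.
  destruct (W_inv x y Dom_xy) as [_ WQ]. cbn [mpow] in WQ. rewrite (mmul1r M Z0) in WQ.
  pose proof (mderiv_mul m M M (fun _ => U) (Xi x) y _ _ (mderiv_const m M U y) Xi_deriv_y) as H1.
  pose proof (mderiv_mul m M M (fun t => mmul M U (Xi x t)) (W x) y _ _ H1 W_deriv_y) as H2.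
  pose proof (mderiv_mul m M m (fun t => mmul M (mmul M U (Xi x t)) (W x t)) (fun _ => V) y _ _ H2
                (mderiv_const M m V y)) as H3.
  eapply mderiv_meq; [exact H3|].
  transitivity (mmul M U (mmul M (madd (mmul M (mneg T) (mmul M X0 W0))
    (mmul M X0 (mmul M W0 (mmul M (mmul M Z0 (anticomm M T Z0)) W0)))) V)).
  { rewrite ?mmul0l, ?mmul0r, ?madd0l, ?madd0r. mexpand. meq_ring. }
  apply mmul_proper; [reflexivity|]. apply mmul_proper; [|reflexivity].
  unfold qy_core, anticomm. mexpand.
  rewrite (mmulCA_of_commute M T X0 W0 T_Xi_commute), <- ?(mmul_assoc M M K X0).
  rewrite (resolvent_sqr M Z0 W0 WQ).
  mexpand. meq_ring.
Qed.

Lemma p_deriv_y :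
  mderiv m m (p_sol M p0 U V K Xi W x) y (sandwich M U X0 W0 (anticomm M T Z0) V).
Proof.
  destruct (W_inv x y Dom_xy) as [QW WQ]. cbn [mpow] in QW, WQ. rewrite (mmul1r M Z0) in QW, WQ.
  pose proof (resolvent_commute M Z0 W0 WQ QW) as ZW.
  pose proof (mderiv_mul m M M (fun _ => U) (Xi x) y _ _ (mderiv_const m M U y) Xi_deriv_y) as H1.
  pose proof (mderiv_mul m M M (fun t => mmul M U (Xi x t)) (fun _ => K) y _ _ H1
                (mderiv_const M M K y)) as H2.
  pose proof (mderiv_mul m M M (fun t => mmul M (mmul M U (Xi x t)) K) (Xi x) y _ _ H2
                Xi_deriv_y) as H3.
  pose proof (mderiv_mul m M M (fun t => mmul M (mmul M (mmul M U (Xi x t)) K) (Xi x t)) (W x) y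
                _ _ H3 W_deriv_y) as H4.
  pose proof (mderiv_mul m M m
                (fun t => mmul M (mmul M (mmul M (mmul M U (Xi x t)) K) (Xi x t)) (W x t))
                (fun _ => V) y _ _ H4 (mderiv_const M m V y)) as H5.
  pose proof (mderiv_sub m m (fun _ => p0 x) _ y _ _ (mderiv_const m m (p0 x) y) H5) as H6.
  eapply mderiv_meq; [exact H6|].
  transitivity (mmul M U (mmul M (mneg (madd (madd
      (mmul M (mneg T) (mmul M X0 (mmul M K (mmul M X0 W0))))
      (mmul M X0 (mmul M K (mmul M (mneg T) (mmul M X0 W0)))))
      (mmul M X0 (mmul M K (mmul M X0 (mmul M W0 (mmul M (mmul M Z0 (anticomm M T Z0)) W0)))))))
      V)).
  { unfold msub. rewrite ?mmul0l, ?mmul0r, ?madd0l, ?madd0r. mexpand. meq_ring. }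
  apply mmul_proper; [reflexivity|]. apply mmul_proper; [|reflexivity].
  unfold anticomm. mexpand. rewrite !(mmulCA_of_commute M T X0 _ T_Xi_commute).
  rewrite <- ?(mmul_assoc M M K X0), !(mmulCA_of_commute M Z0 W0 _ ZW), !(resolvent_sqr M Z0 W0 WQ).
  mexpand. meq_ring.
Qed.

Lemma q_y_sq_add_p_y_sq :
  meq m m (madd (mmul m (sandwich M U X0 W0 (qy_core M T Z0) V) (sandwich M U X0 W0 (qy_core M T Z0) V))
                (mmul m (sandwich M U X0 W0 (anticomm M T Z0) V) (sandwich M U X0 W0 (anticomm M T Z0) V)))
          (sandwich M U X0 W0 (anticomm M T Z0) V).
Proof.
  destruct (W_inv x y Dom_xy) as [QW WQ]. cbn [mpow] in QW, WQ. rewrite (mmul1r M Z0) in QW, WQ.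
  rewrite !sandwich_mul, <- mmul_addr, <- mmul_addl.
  apply mmul_proper; [reflexivity|]. apply mmul_proper; [|reflexivity].
  apply (sandwich_core_sq_add M X0 W0 _ (anticomm M S Z0)).
  - intros Y. rewrite <- sylvester. unfold anticomm. mexpand.
    rewrite (mmulCA_of_commute M S X0 Y S_Xi_commute), <- !(mmul_assoc M M K X0). reflexivity.
  - exact (qy_py_core_identity M Z0 W0 WQ QW S T ST TS).
Qed.

End Solution.

Theorem mainTheorem2
  (m M : nat) (S Sinv U V K : Mat) (p0 : R -> Mat)
  (Xi W : R -> R -> Mat) (Dom : R -> R -> Prop) :
  is_inverse M S Sinv ->
  meq M M (madd (mmul M S K) (mmul M K S)) (mmul m V U) ->
  (forall x y,
     is_mexp M (mneg (madd (mrscal x S) (mrscal y Sinv))) (Xi x y)) ->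
  open2 Dom ->
  (forall x y, Dom x y ->
     is_inverse M (madd mid (mpow M (mmul M K (Xi x y)) 2)) (W x y)) ->
  forall x y, Dom x y ->
    exists qy py : Mat,
      has_pderiv_y m m (q_sol M U V Xi W) x y qy /\
      has_pderiv_y m m (p_sol M p0 U V K Xi W) x y py /\
      meq m m (madd (mmul m qy qy) (mmul m py py)) py.
Proof.
  intros [ST TS] sylvester Xi_exp Dom_open W_inv x y Dom_xy.
  exists (sandwich M U (Xi x y) (W x y) (qy_core M Sinv (mmul M K (Xi x y))) V),
         (sandwich M U (Xi x y) (W x y) (anticomm M Sinv (mmul M K (Xi x y))) V).
  split; [|split].
  - apply mderiv_has_pderiv_y; eapply q_deriv_y; eauto.
  - apply mderiv_has_pderiv_y; eapply p_deriv_y; eauto.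
  - eapply q_y_sq_add_p_y_sq; eauto.
Qed.
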